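(* Let $\Psi$ be a reconstructor, let $\delta_1,\delta_2\ge0$ with corresponding data $y^{\delta_1},y^{\delta_2}\in\mathbb{R}^m$, and let $x\in\mathcal{X}$. Then $$\mathcal{J}_{\Psi,\delta_1}(x)\le 2\mathcal{J}_{\Psi,\delta_2}(x)+2\|y^{\delta_1}-y^{\delta_2}\|_2^2+\lambda\,\|w(\Psi(y^{\delta_1}))-w(\Psi(y^{\delta_2}))\|_1\,\|\,|Dx|\,\|_1,$$ where $\mathcal{J}_{\Psi,\delta}(x)=\|Kx-y^\delta\|_2^2+\lambda\|w(\Psi(y^\delta))\odot|Dx|\|_1$.
   Context: Let $K\in\mathbb{R}^{m\times n}$, and let $D_h,D_v\in\mathbb{R}^{n\times n}$ be the discrete horizontal and vertical difference operators; $|Dx|\in\mathbb{R}^n$, $(|Dx|)_i=\sqrt{(D_hx)_i^2+(D_vx)_i^2}$. $\mathcal{X}=\{x\in\mathbb{R}^n: x_i\ge 0\ \forall i\}$. Fix $\lambda>0$, $\eta>0$, $p\in(0,1)$, and for $\tilde x\in\mathbb{R}^n$ define $(w(\tilde{x}))_i=\big(\eta/\sqrt{\eta^2+(|D\tilde{x}|)_i^2}\big)^{1-p}$. A reconstructor is a Lipschitz continuous map $\Psi:\mathbb{R}^m\to\mathbb{R}^n$. For $\delta\ge0$, $y^\delta=Kx^{GT}+e$ with $x^{GT}\in\mathcal{X}$ and $\|e\|_2\le\delta$. $\odot$ is the entrywise product. *)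

From HB Require Import structures.
From mathcomp Require Import all_boot all_order all_algebra.
From mathcomp Require Import all_classical all_reals all_analysis.
Set Implicit Arguments. Unset Strict Implicit. Unset Printing Implicit Defensive.
Import Order.TTheory GRing.Theory Num.Theory.
Local Open Scope ring_scope.

Section Defs.
Variable R : realType.

Definition norm2 k (v : 'cV[R]_k) : R := Num.sqrt (\sum_i v i 0 ^+ 2).

Definition norm1 k (v : 'cV[R]_k) : R := \sum_i `|v i 0|.

Definition hadamard k (a b : 'cV[R]_k) : 'cV[R]_k := \col_i (a i 0 * b i 0).

Definition absD n (Dh Dv : 'M[R]_n) (x : 'cV[R]_n) : 'cV[R]_n :=
  \col_i Num.sqrt ((Dh *m x) i 0 ^+ 2 + (Dv *m x) i 0 ^+ 2).

Definition weight n (Dh Dv : 'M[R]_n) (eta p : R) (xt : 'cV[R]_n) : 'cV[R]_n :=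
  \col_i ((eta / Num.sqrt (eta ^+ 2 + absD Dh Dv xt i 0 ^+ 2)) `^ (1 - p)).

(* the feasible set X = nonnegative vectors *)
Definition nonneg n (x : 'cV[R]_n) : Prop := forall i, 0 <= x i 0.

(* reconstructor: Lipschitz continuous map R^m -> R^n *)
Definition Lipschitz2 m n (Psi : 'cV[R]_m -> 'cV[R]_n) : Prop :=
  exists L : R, forall y1 y2, norm2 (Psi y1 - Psi y2) <= L * norm2 (y1 - y2).

Definition Jfun m n (K : 'M[R]_(m, n)) (Dh Dv : 'M[R]_n) (lambda eta p : R)
  (Psi : 'cV[R]_m -> 'cV[R]_n) (y : 'cV[R]_m) (x : 'cV[R]_n) : R :=
  norm2 (K *m x - y) ^+ 2
  + lambda * norm1 (hadamard (weight Dh Dv eta p (Psi y)) (absD Dh Dv x)).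

End Defs.

From HB Require Import structures.
From mathcomp Require Import all_boot all_order all_algebra.
From mathcomp Require Import all_classical all_reals all_analysis.
From mathcomp Require Import ring lra.
Import Order.TTheory GRing.Theory Num.Theory.
Local Open Scope ring_scope.

(* The estimate is purely algebraic. Writing [K x - y1 = (K x - y2) + (y2 - y1)],
   the data terms are compared by [(a + b)^2 <= 2 a^2 + 2 b^2]; writing
   [w1 = w2 + (w1 - w2)], the regularisers are compared by the triangle inequality
   and [||u .* v||_1 <= ||u||_1 ||v||_1]. *)

Section Norms.
Context {R : realType} {k : nat}.
Implicit Types u v : 'cV[R]_k.

Lemma norm2_sqr v : norm2 v ^+ 2 = \sum_i v i 0 ^+ 2.
Proof. by rewrite sqr_sqrtr // sumr_ge0 // => i _; rewrite sqr_ge0. Qed.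

Lemma norm2N v : norm2 (- v) = norm2 v.
Proof. by rewrite /norm2; congr Num.sqrt; apply: eq_bigr => i _; rewrite mxE sqrrN. Qed.

Lemma norm2D_sqr_le u v : norm2 (u + v) ^+ 2 <= 2 * norm2 u ^+ 2 + 2 * norm2 v ^+ 2.
Proof.
rewrite !norm2_sqr !mulr_sumr -big_split /=; apply: ler_sum => i _; rewrite mxE.
by have := sqr_ge0 (u i 0 - v i 0); rewrite !expr2; nra.
Qed.

Lemma norm1_ge0 v : 0 <= norm1 v.
Proof. exact: sumr_ge0. Qed.

Lemma norm1D_le u v : norm1 (u + v) <= norm1 u + norm1 v.
Proof. by rewrite -big_split /=; apply: ler_sum => i _; rewrite mxE ler_normD. Qed.

Lemma norm1_hadamard_le u v : norm1 (hadamard u v) <= norm1 u * norm1 v.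
Proof.
rewrite /norm1 mulr_suml; apply: ler_sum => i _; rewrite mxE normrM.
by rewrite ler_wpM2l // (bigD1 i) //= lerDl sumr_ge0.
Qed.

Lemma norm1_hadamard_perturb_le u1 u2 v :
  norm1 (hadamard u1 v) <= norm1 (hadamard u2 v) + norm1 (u1 - u2) * norm1 v.
Proof.
have -> : hadamard u1 v = hadamard u2 v + hadamard (u1 - u2) v.
  by apply/matrixP => i j; rewrite !mxE; ring.
by apply: (le_trans (norm1D_le _ _)); rewrite lerD2l norm1_hadamard_le.
Qed.

End Norms.

Lemma lerD_double_bound (R : realFieldType) (a b c d e f : R) :
  a <= 2 * b + 2 * c -> d <= e + f -> 0 <= e -> a + d <= 2 * (b + e) + 2 * c + f.
Proof. lra. Qed.

Theorem lemma7 (R : realType) (m n : nat) (K : 'M[R]_(m, n)) (Dh Dv : 'M[R]_n)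
  (lambda eta p : R) (Hlambda : 0 < lambda) (Heta : 0 < eta) (Hp0 : 0 < p) (Hp1 : p < 1)
  (Psi : 'cV[R]_m -> 'cV[R]_n) (HPsi : Lipschitz2 Psi)
  (xGT : 'cV[R]_n) (HxGT : nonneg xGT)
  (delta1 delta2 : R) (Hd1 : 0 <= delta1) (Hd2 : 0 <= delta2)
  (e1 e2 : 'cV[R]_m) (He1 : norm2 e1 <= delta1) (He2 : norm2 e2 <= delta2)
  (y1 y2 : 'cV[R]_m) (Hy1 : y1 = K *m xGT + e1) (Hy2 : y2 = K *m xGT + e2)
  (x : 'cV[R]_n) (Hx : nonneg x) :
  Jfun K Dh Dv lambda eta p Psi y1 x
  <= 2 * Jfun K Dh Dv lambda eta p Psi y2 x
     + 2 * norm2 (y1 - y2) ^+ 2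
     + lambda * norm1 (weight Dh Dv eta p (Psi y1) - weight Dh Dv eta p (Psi y2))
              * norm1 (absD Dh Dv x).
Proof.
rewrite /Jfun; set w1 := weight _ _ _ _ (Psi y1); set w2 := weight _ _ _ _ (Psi y2).
set Dx := absD Dh Dv x.
have data_le : norm2 (K *m x - y1) ^+ 2
    <= 2 * norm2 (K *m x - y2) ^+ 2 + 2 * norm2 (y1 - y2) ^+ 2.
  rewrite -[norm2 (y1 - y2)]norm2N opprB.
  by have := norm2D_sqr_le (K *m x - y2) (y2 - y1); rewrite addrA subrK.
have reg_le : lambda * norm1 (hadamard w1 Dx)
    <= lambda * norm1 (hadamard w2 Dx) + lambda * norm1 (w1 - w2) * norm1 Dx.
  by rewrite -mulrA -mulrDr ler_pM2l // norm1_hadamard_perturb_le.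
apply: lerD_double_bound data_le reg_le _.
exact: mulr_ge0 (ltW Hlambda) (norm1_ge0 _).
Qed.
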